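(* Let $X$ be a real reflexive Banach space, $T:X\rightrightarrows X^{\ast}$ maximally monotone, and $h\in\mathcal{H}(T)$. Then $\breve{T}_h$ is additive. Moreover, $\breve{T}_h$ is maximally additive if and only if $(\mathcal{A}h)^{\ast}\circ i=\mathcal{A}h$. Consequently, if $h^{\ast}\circ i=h$ then $\breve{T}_h$ is maximally additive.
   Context: $X^{\ast}$ is the dual of $X$ with pairing $\langle\cdot,\cdot\rangle$. The dual of $X\times X^{\ast}$ is identified with $X^{\ast}\times X$ via $\langle (x,x^{\ast}),(y^{\ast},y)\rangle=\langle x,y^{\ast}\rangle+\langle y,x^{\ast}\rangle$; for $g:X\times X^{\ast}\to\mathbb{R}\cup\{+\infty\}$, $g^{\ast}(y^{\ast},y)=\sup_{(x,x^{\ast})}\{\langle x,y^{\ast}\rangle+\langle y,x^{\ast}\rangle-g(x,x^{\ast})\}$, and $i(x,x^{\ast})=(x^{\ast},x)$. $\mathcal{H}(T)$ is the family of lower semicontinuous convex $h:X\times X^{\ast}\to\mathbb{R}\cup\{+\infty\}$ with $h(x,x^{\ast})\ge\langle x,x^{\ast}\rangle$ everywhere and equality whenever $x^{\ast}\in T(x)$. $\mathcal{A}h:=\tfrac12(h+h^{\ast}\circ i)$. For $\eta\ge0$, $\partial_\eta h(z)$ is the set of $(y^{\ast},y)\in X^{\ast}\times X$ with $h(w,w^{\ast})\ge h(z)+\langle (w,w^{\ast})-z,(y^{\ast},y)\rangle-\eta$ for all $(w,w^{\ast})$ when $h(z)<\infty$, and $\emptyset$ otherwise; $\breve{T}_h(\epsilon,x):=\{x^{\ast}:(x^{\ast},x)\in\partial_{2\epsilon}h(x,x^{\ast})\}$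 for $\epsilon\ge0$. For $g\in\mathcal{H}(T)$, $L^{g}(\epsilon,x)=\{x^{\ast}:g(x,x^{\ast})\le\langle x,x^{\ast}\rangle+\epsilon\}$; the family $\mathbb{E}(T)$ of enlargements of $T$ consists exactly of the maps $L^g$, $g\in\mathcal{H}(T)$ (each with a unique $g$). An enlargement $E$ is additive if $\langle x-y,x^{\ast}-y^{\ast}\rangle\ge-(\epsilon_1+\epsilon_2)$ whenever $x^{\ast}\in E(\epsilon_1,x)$, $y^{\ast}\in E(\epsilon_2,y)$. An additive $E\in\mathbb{E}(T)$ is maximally additive if whenever $E'\in\mathbb{E}(T)$ is additive and $E(\epsilon,x)\subset E'(\epsilon,x)$ for all $\epsilon\ge0$, $x\in X$, then $E=E'$. *)

From HB Require Import structures.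
From mathcomp Require Import all_boot all_order all_algebra.
From mathcomp Require Import all_classical all_reals all_analysis.
Set Implicit Arguments. Unset Strict Implicit. Unset Printing Implicit Defensive.
Import Order.TTheory GRing.Theory Num.Theory.
Import numFieldNormedType.Exports.
Local Open Scope classical_set_scope.
Local Open Scope ring_scope.

Section Defs.
Variables (R : realType) (X : normedModType R).

(* X^* is represented as the set of continuous linear functionals X -> R;
   an element x^* of X^* is a function f : X -> R with [is_dual f];
   the pairing <x, x^*> is f x. *)
Definition is_dual (f : X -> R) : Prop :=
  (forall (a : R) (u v : X), f (a *: u + v) = a * f u + f v) /\ continuous f.

Definition dnorm (f : X -> R) : R :=
  sup [set `|f x| | x in [set x : X | `|x| <= 1]].

Definition ddist (f g : X -> R) : R := dnorm (fun u => f u - g u).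

(* reflexivity: the canonical embedding X -> X^** is onto, where X^** is the
   space of bounded (= continuous) linear functionals on (X^*, dnorm) *)
Definition reflexive_space : Prop :=
  forall phi : (X -> R) -> R,
    (forall (a b : R) (f g : X -> R), is_dual f -> is_dual g ->
       phi (fun u => a * f u + b * g u) = a * phi f + b * phi g) ->
    (exists C : R, forall f, is_dual f -> `|phi f| <= C * dnorm f) ->
    exists x : X, forall f, is_dual f -> phi f = f x.

Definition is_operator (T : X -> set (X -> R)) : Prop :=
  forall x f, T x f -> is_dual f.

Definition monotone_op (T : X -> set (X -> R)) : Prop :=
  forall x y f g, T x f -> T y g -> 0 <= f (x - y) - g (x - y).

Definition max_monotone_op (T : X -> set (X -> R)) : Prop :=
  is_operator T /\ monotone_op T /\
  forall S : X -> set (X -> R), is_operator S -> monotone_op S ->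
    (forall x, T x `<=` S x) -> forall x, S x = T x.

(* functions X × X^* -> R ∪ {+oo} (only their values on X × X^* matter) *)
Definition lsc (h : X -> (X -> R) -> \bar R) : Prop :=
  forall x f, is_dual f -> forall a : R, (a%:E < h x f)%E ->
    exists2 d : R, 0 < d & forall y g, is_dual g ->
      `|y - x| + ddist g f < d -> (a%:E < h y g)%E.

Definition convex_fun (h : X -> (X -> R) -> \bar R) : Prop :=
  forall (x1 x2 : X) (f1 f2 : X -> R) (t : R), is_dual f1 -> is_dual f2 -> 0 < t -> t < 1 ->
    (h ((t *: x1 + (1 - t) *: x2)%R) (fun u => (t * f1 u + (1 - t) * f2 u)%R)
      <= t%:E * h x1 f1 + (1 - t)%:E * h x2 f2)%E.

Definition HT (T : X -> set (X -> R)) (h : X -> (X -> R) -> \bar R) : Prop :=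
  lsc h /\ convex_fun h /\
  (forall x f, is_dual f -> ((f x)%:E <= h x f)%E) /\
  (forall x f, T x f -> h x f = (f x)%:E).

Definition fconj (g : X -> (X -> R) -> \bar R) (ys : X -> R) (y : X) : \bar R :=
  ereal_sup [set e | exists x xs, is_dual xs /\ e = ((ys x + xs y)%:E - g x xs)%E].

Definition Aop (h : X -> (X -> R) -> \bar R) : X -> (X -> R) -> \bar R :=
  fun x xs => ((2^-1)%:E * (h x xs + fconj h xs x))%E.

Definition esubdiff (h : X -> (X -> R) -> \bar R) (eta : R) (x : X) (xs : X -> R)
  (ys : X -> R) (y : X) : Prop :=
  is_dual ys /\ (h x xs < +oo)%E /\
  forall w ws, is_dual ws ->
    (h x xs + (ys (w - x) + (ws y - xs y) - eta)%:E <= h w ws)%E.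

Definition Tbreve (h : X -> (X -> R) -> \bar R) (eps : R) (x : X) : set (X -> R) :=
  [set xs | is_dual xs /\ esubdiff h (2 * eps) x xs xs x].

Definition Lg (g : X -> (X -> R) -> \bar R) (eps : R) (x : X) : set (X -> R) :=
  [set xs | is_dual xs /\ (g x xs <= (xs x + eps)%:E)%E].

Definition additive_enl (E : R -> X -> set (X -> R)) : Prop :=
  forall e1 e2 x y xs ys, 0 <= e1 -> 0 <= e2 -> E e1 x xs -> E e2 y ys ->
    - (e1 + e2) <= xs (x - y) - ys (x - y).

Definition is_enlargement (T : X -> set (X -> R)) (E : R -> X -> set (X -> R)) :=
  exists g, HT T g /\ forall eps x, 0 <= eps -> E eps x = Lg g eps x.

Definition max_additive_enl (T : X -> set (X -> R)) (E : R -> X -> set (X -> R)) :=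
  is_enlargement T E /\ additive_enl E /\
  forall E', is_enlargement T E' -> additive_enl E' ->
    (forall eps x, 0 <= eps -> E eps x `<=` E' eps x) ->
    forall eps x, 0 <= eps -> E eps x = E' eps x.

End Defs.

From HB Require Import structures.
From mathcomp Require Import all_boot all_order all_algebra.
From mathcomp Require Import all_classical all_reals all_analysis.
From mathcomp Require Import ring lra.
Import Order.TTheory GRing.Theory Num.Theory.
Import numFieldNormedType.Exports.
Local Open Scope classical_set_scope.
Local Open Scope ring_scope.

(* Write [g = Aop h]. Fenchel-Young for [h] puts [g] in [HT T] and gives the
   cross inequality [<x, ys> + <y, xs> <= g (x, xs) + g (y, ys)], equivalently
   [g^* o i <= g]; moreover [Tbreve h = Lg g]. An enlargement [Lg f] is additive
   exactly when [f] satisfies the cross inequality, and [Lg g] is contained in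
   [Lg f] exactly when [f <= g]. Hence [Tbreve h] is additive, and if
   [g^* o i = g] then every additive [Lg f] containing [Lg g] satisfies
   [g = g^* o i <= f^* o i <= f <= g].
   Conversely, the regularization
   [reg z = inf_u (g (z + u) + g^* (i (z - u)) + q u) / 2], with
   [q (a, as) = |a|^2 + |as|^2], satisfies the cross inequality and lies below
   [g]; its biconjugate is again an additive member of [HT T] below [g], so
   maximality forces [g <= reg]. Taking [u = 0] gives [g^* o i = g] wherever
   [g] is finite, and lower semicontinuity of the biconjugate along a segment
   towards a point of the graph of [T] shows that [g] is finite wherever
   [g^* o i] is. *)

Section DualFunctional.
Context {R : realType} {X : normedModType R}.
Local Notation D := (@is_dual R X).
Implicit Types (f g : X -> R) (u v : X).

Lemma dual0 {f} : D f -> f 0 = 0.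
Proof. by case=> lin _; have := lin 1 0 0; rewrite scale1r addr0 mul1r; lra. Qed.

Lemma dualD {f} : D f -> forall u v, f (u + v) = f u + f v.
Proof. by case=> lin _ u v; rewrite -[u]scale1r lin mul1r scale1r. Qed.

Lemma dualZ {f} : D f -> forall a u, f (a *: u) = a * f u.
Proof.
by move=> Df a u; have [lin _] := Df; rewrite -[a *: u]addr0 lin dual0 // addr0.
Qed.

Lemma dualN {f} : D f -> forall u, f (- u) = - f u.
Proof. by move=> Df u; rewrite -scaleN1r dualZ // mulN1r. Qed.

Lemma dualB {f} : D f -> forall u v, f (u - v) = f u - f v.
Proof. by move=> Df u v; rewrite dualD // dualN. Qed.

Lemma is_dual_comb {f g} a b : D f -> D g -> D (fun u => a * f u + b * g u).
Proof.
move=> [linf cf] [ling cg]; split => [c u v|x]; first by rewrite linf ling; ring.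
apply: (@continuousD _ _ _ (fun u => a * f u) (fun u => b * g u)).
  by apply: (@continuousM _ _ (fun=> a) f); [exact: cst_continuous|exact: cf].
by apply: (@continuousM _ _ (fun=> b) g); [exact: cst_continuous|exact: cg].
Qed.

Lemma is_dualD {f g} : D f -> D g -> D (fun u => f u + g u).
Proof.
move=> Df Dg; have := is_dual_comb 1 1 Df Dg.
by congr is_dual; apply: funext => u; rewrite !mul1r.
Qed.

Lemma is_dualB {f g} : D f -> D g -> D (fun u => f u - g u).
Proof.
move=> Df Dg; have := is_dual_comb 1 (-1) Df Dg.
by congr is_dual; apply: funext => u; rewrite mul1r mulN1r.
Qed.

Lemma is_dual_cst0 : D (fun _ => 0).
Proof. by split=> [*|x]; [rewrite mulr0 addr0|exact: cst_continuous]. Qed.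

(* Continuity at 0 bounds [f] by [2 / e] on the unit ball, where [|f| < 1] on
   the ball of radius [e]. *)
Lemma dual_bounded_ball {f} : D f -> exists2 K, 0 < K & forall u, `|u| <= 1 -> `|f u| <= K.
Proof.
move=> Df; have /cvgrPdist_lt /(_ 1 ltr01) /nbhs_norm0P [e e0 He] := proj2 Df 0.
exists (2 / e); first by rewrite divr_gt0.
move=> u u1; have small : `|(e / 2) *: u| < e.
  rewrite normrZ ger0_norm ?divr_ge0 ?(ltW e0) //.
  have : e / 2 * `|u| <= e / 2 by rewrite ler_piMr ?divr_ge0 ?(ltW e0).
  by move/le_lt_trans; apply; rewrite ltr_pdivrMr // ltr_pMr //; lra.
have := He _ small; rewrite /= (dual0 Df) sub0r normrN (dualZ Df) normrM.
rewrite ger0_norm ?divr_ge0 ?(ltW e0) // ler_pdivlMr // => fu.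
have -> : `|f u| * e = 2 * (e / 2 * `|f u|) by field.
lra.
Qed.

Lemma has_sup_dnorm {f} : D f -> has_sup [set `|f u| | u in [set u : X | `|u| <= 1]].
Proof.
move=> Df; split; first by exists `|f 0|, 0 => //=; rewrite normr0.
by have [K _ fK] := dual_bounded_ball Df; exists K => _ [u /= u1 <-]; exact: fK.
Qed.

Lemma dnorm_ge_ball {f} u : D f -> `|u| <= 1 -> `|f u| <= dnorm f.
Proof. by move=> Df u1; apply: (sup_upper_bound (has_sup_dnorm Df)); exists u. Qed.

Lemma dnorm_ge0 {f} : D f -> 0 <= dnorm f.
Proof.
move=> Df; apply: le_trans (normr_ge0 (f 0)) (dnorm_ge_ball 0 Df _).
by rewrite normr0 ler01.
Qed.

Lemma dual_le_dnorm {f} u : D f -> `|f u| <= dnorm f * `|u|.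
Proof.
move=> Df; have [->|u0] := eqVneq u 0; first by rewrite (dual0 Df) !normr0 mulr0.
have nu0 : 0 < `|u| by rewrite normr_gt0.
have := dnorm_ge_ball (`|u|^-1 *: u) Df.
rewrite normrZ ger0_norm ?invr_ge0 ?normr_ge0 // mulVf ?lt0r_neq0 // lexx.
rewrite (dualZ Df) normrM ger0_norm ?invr_ge0 ?normr_ge0 // => /(_ isT).
by rewrite -ler_pdivrMr // mulrC.
Qed.

End DualFunctional.

Section ExtendedReals.
Context {R : realType}.
Local Open Scope ereal_scope.
Implicit Types (a c t : R) (F G : \bar R).

Lemma pmulEFiny {t} : (0 < t)%R -> t%:E * +oo = +oo.
Proof. by move=> t0; rewrite mulry gtr0_sg // mul1e. Qed.

Lemma leeBswap a F G : a%:E - F <= G -> a%:E - G <= F.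
Proof. by case: F => [f||]; case: G => [g||] //=; rewrite ?lee_fin ?leey ?leNye //; lra. Qed.

Lemma leeBEFin a c F : (a%:E - F <= c%:E) <-> ((a - c)%:E <= F).
Proof. by case: F => [f||] //=; rewrite ?lee_fin ?leey ?leNye //; lra. Qed.

Lemma leeD_of_leeB a F G : F != -oo -> G != -oo -> a%:E - F <= G -> a%:E <= F + G.
Proof. by case: F => [f||]; case: G => [g||] //=; rewrite ?lee_fin ?leey ?leNye //; lra. Qed.

Lemma leeB_of_leeD a F G : F != -oo -> a%:E <= F + G -> a%:E - F <= G.
Proof. by case: F => [f||]; case: G => [g||] //=; rewrite ?lee_fin ?leey ?leNye //; lra. Qed.

Lemma half_sum_cases {F G} : F != -oo -> G != -oo ->
  ((2^-1)%:E * (F + G) = +oo /\ (F = +oo \/ G = +oo)) \/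
  exists r c, [/\ F = r%:E, G = c%:E & (2^-1)%:E * (F + G) = ((r + c) / 2)%:E].
Proof.
have half_y : (2^-1)%:E * +oo = +oo :> \bar R by rewrite pmulEFiny ?invr_gt0.
case: F => [r||]; case: G => [c||] //= _ _; last 3 first.
- by left; rewrite half_y; split; [|right].
- by left; rewrite half_y; split; [|left].
- by left; rewrite half_y; split; [|left].
by right; exists r, c; rewrite mulrC.
Qed.

Lemma half_sum3_cases F G (s : R) : F != -oo -> G != -oo ->
  ((2^-1)%:E * (F + G + s%:E) = +oo) \/
  exists r c, [/\ F = r%:E, G = c%:E & (2^-1)%:E * (F + G + s%:E) = ((r + c + s) / 2)%:E].
Proof.
move=> nF nG; case: (half_sum_cases nF nG) => [[_ [->|->]]|[r [c [-> -> _]]]].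
- by left; rewrite !addye ?pmulEFiny ?invr_gt0 //; case: (G) nG.
- by left; rewrite addey ?addye ?pmulEFiny ?invr_gt0 //; case: (F) nF.
by right; exists r, c; split => //; rewrite -!EFinD -EFinM mulrC.
Qed.

Lemma lee_convex_comb t (a c : R) F G : (0 < t)%R -> (t < 1)%R ->
  a%:E <= F -> c%:E <= G -> (t * a + (1 - t) * c)%:E <= t%:E * F + (1 - t)%:E * G.
Proof.
move=> t0 t1; have t1' : (0 < 1 - t)%R by rewrite subr_gt0.
case: F => [f||]; case: G => [g||] //=; rewrite ?lee_fin.
- by move=> ? ?; nra.
- by move=> _ _; rewrite (pmulEFiny t1') /= leey.
- by move=> _ _; rewrite (pmulEFiny t0) /= leey.
- by move=> _ _; rewrite (pmulEFiny t0) (pmulEFiny t1') /= leey.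
Qed.

Lemma ereal_inf_neqNy (S : set (\bar R)) c :
  (forall e1 e2, S e1 -> S e2 -> c%:E <= e1 + e2) -> (forall e, S e -> e != -oo) ->
  ereal_inf S != -oo.
Proof.
move=> Sc Sn; apply/negP => /eqP Sinf.
have /ereal_inf_lt [e1 S1 e1lt] : ereal_inf S < 0%:E by rewrite Sinf ltNyr.
have /ereal_inf_lt [e2 S2 e2lt] : ereal_inf S < (c - fine e1)%:E by rewrite Sinf ltNyr.
have := Sc _ _ S1 S2; have := Sn _ S1; have := Sn _ S2.
move: e1lt e2lt; case: e1 {S1} => [r1||] //; case: e2 {S2} => [r2||] //=.
by rewrite !lte_fin lee_fin => ? ? _ _ ?; clear Sinf; lra.
Qed.

Lemma ereal_inf_sum_lb (S1 S2 : set (\bar R)) c :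
  (forall e1 e2, S1 e1 -> S2 e2 -> c%:E <= e1 + e2) ->
  (forall e, S1 e -> e != -oo) -> (forall e, S2 e -> e != -oo) ->
  ereal_inf S1 != -oo -> ereal_inf S2 != -oo -> c%:E <= ereal_inf S1 + ereal_inf S2.
Proof.
move=> Sc Sn1 Sn2; case E1: (ereal_inf S1) => [i1||] //; case E2: (ereal_inf S2) => [i2||] // _ _;
  try by rewrite /= leey.
rewrite leNgt; apply/negP; rewrite -EFinD lte_fin => ci.
pose d := (c - (i1 + i2))%R; have d0 : (0 < d)%R by rewrite /d; lra.
have /ereal_inf_lt [e1 S1e e1lt] : ereal_inf S1 < (i1 + d / 2)%:E by rewrite E1 lte_fin; lra.
have /ereal_inf_lt [e2 S2e e2lt] : ereal_inf S2 < (i2 + d / 2)%:E by rewrite E2 lte_fin; lra.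
have := Sc _ _ S1e S2e; have := Sn1 _ S1e; have := Sn2 _ S2e.
move: e1lt e2lt; case: e1 {S1e} => [r1||] //; case: e2 {S2e} => [r2||] //=.
by rewrite !lte_fin lee_fin /d => ? ? _ _ ?; clear E1 E2; lra.
Qed.

End ExtendedReals.

Section Dyadic.
Context {R : realType}.

Lemma le0_of_dyadic (m k : R) :
  (forall n, (0 < n)%N -> m <= (2^-1)^+n * k) -> m <= 0.
Proof.
move=> mk; rewrite leNgt; apply/negP => m0.
have k0 : 0 < k.
  have := mk 1%N isT; rewrite expr1 => h1; rewrite -(@pmulr_rgt0 _ (2^-1)) //.
  exact: lt_le_trans h1.
have km0 : 0 <= k / m by rewrite divr_ge0 // ltW.
set n0 := Num.Def.archi_bound (k / m).
have Hn0 := archi_boundP km0; rewrite -/n0 in Hn0.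
have n_le_2n : n0.+1%:R <= (2:R) ^+ n0.+1.
  by rewrite -natrX ler_nat ltnW // ltn_expl.
have : n0%:R <= n0.+1%:R :> R by rewrite ler_nat.
have p2 : 0 < (2:R) ^+ n0.+1 by rewrite exprn_gt0.
have : m * (2:R) ^+ n0.+1 <= k by rewrite -ler_pdivlMr // mulrC -exprVn; exact: mk.
have : k < m * n0%:R by rewrite -ltr_pdivrMl // mulrC.
nra.
Qed.

Definition dyad (n : nat) : R := 1 - (2^-1)^+n.

Lemma dyad_gt0 {n} : (0 < n)%N -> 0 < dyad n.
Proof.
move=> n0; rewrite /dyad subr_gt0 exprn_ilt1 ?invr_ge0 ?invf_lt1 ?ltr1n //.
by rewrite -lt0n.
Qed.

Lemma dyad_lt1 n : dyad n < 1.
Proof. by rewrite /dyad ltrBlDr ltrDl exprn_gt0 ?invr_gt0. Qed.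

Lemma dyadS n : dyad n.+1 = (1 + dyad n) / 2.
Proof. by rewrite /dyad exprS; lra. Qed.

End Dyadic.

Section Conjugate.
Context {R : realType} {X : normedModType R}.
Local Notation D := (@is_dual R X).
Local Open Scope ereal_scope.
Implicit Types f g : X -> (X -> R) -> \bar R.

Definition fconji f : X -> (X -> R) -> \bar R := fun x xs => fconj f xs x.

Definition segx (t : R) (x x0 : X) : X := (t *: x + (1 - t) *: x0)%R.
Definition segf (t : R) (xs xs0 : X -> R) : X -> R := fun u => (t * xs u + (1 - t) * xs0 u)%R.

Lemma AopE h x xs : Aop h x xs = (2^-1)%:E * (h x xs + fconji h x xs).
Proof. by []. Qed.

Lemma fconji_ge f y ys x {xs} : D xs -> (ys x + xs y)%:E - f x xs <= fconji f y ys.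
Proof. by move=> Dxs; apply: ereal_sup_ubound; exists x, xs. Qed.

Lemma fconji_le f y ys M :
  (forall x xs, D xs -> (ys x + xs y)%:E - f x xs <= M) -> fconji f y ys <= M.
Proof. by move=> H; apply: ge_ereal_sup => e [x [xs [Dxs ->]]]; exact: H. Qed.

Lemma le_fconji {f g} : (forall x xs, D xs -> f x xs <= g x xs) ->
  forall y ys, fconji g y ys <= fconji f y ys.
Proof.
move=> fg y ys; apply: fconji_le => x xs Dxs; apply: le_trans (fconji_ge _ _ _ _ Dxs).
by apply: leeB => //; exact: fg.
Qed.

Lemma eq_fconji {f g} : (forall x xs, D xs -> f x xs = g x xs) ->
  forall y ys, fconji f y ys = fconji g y ys.
Proof.
by move=> fg y ys; apply/eqP; rewrite eq_le !le_fconji // => x xs Dxs; rewrite fg.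
Qed.

Lemma fconji2_le f x {xs} : D xs -> fconji (fconji f) x xs <= f x xs.
Proof.
move=> Dxs; apply: fconji_le => y ys Dys; apply: leeBswap.
by rewrite [(xs _ + _)%R]addrC; apply: fconji_ge.
Qed.

Lemma fconji_convex f : convex_fun (fconji f).
Proof.
move=> x1 x2 f1 f2 t Df1 Df2 t0 t1; apply: fconji_le => y ys Dys.
rewrite (dualD Dys) !(dualZ Dys).
move: (fconji_ge f x1 f1 y Dys) (fconji_ge f x2 f2 y Dys).
case: (f y ys) => [p||] /=.
- rewrite -!EFinD => le1 le2.
  have -> : (t * f1 y + (1 - t) * f2 y + (t * ys x1 + (1 - t) * ys x2) - p =
     t * (f1 y + ys x1 - p) + (1 - t) * (f2 y + ys x2 - p))%R by ring.
  exact: lee_convex_comb.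
- by move=> _ _; rewrite addeNy leNye.
- rewrite !addey // !leye_eq => /eqP -> /eqP ->.
  by rewrite !pmulEFiny ?subr_gt0 //= leey.
Qed.

Lemma fconji_lsc f : lsc (fconji f).
Proof.
move=> x fs Dfs a /ereal_sup_gt [e [y0 [ys0 [Dys0 ->]]]].
case Ef: (f y0 ys0) => [p||] /=; last 2 first.
- by rewrite ltNge leNye.
- move=> _; exists 1%R => // y g Dg _.
  apply: lt_le_trans (fconji_ge f y g y0 Dys0); rewrite Ef /= addey //.
  exact: ltry.
rewrite lte_fin => ae.
set del := (fs y0 + ys0 x - p - a)%R.
have del0 : (0 < del)%R by rewrite /del; lra.
set K := (dnorm ys0 + `|y0| + 1)%R.
have dn0 := dnorm_ge0 Dys0; have ny0 := normr_ge0 y0.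
have K0 : (0 < K)%R by rewrite /K; lra.
exists (del / (2 * K))%R; first by rewrite divr_gt0 // mulr_gt0.
move=> y g Dg close.
apply: lt_le_trans (fconji_ge f y g y0 Dys0); rewrite Ef /= lte_fin.
have Dgf := is_dualB Dg Dfs.
have dg := dual_le_dnorm y0 Dgf; have dy := dual_le_dnorm (y - x)%R Dys0.
rewrite (dualB Dys0) in dy.
move: close; rewrite /ddist.
set q := dnorm (fun u => g u - fs u)%R; set d := (`|y - x|)%R.
have q0 : (0 <= q)%R := dnorm_ge0 Dgf.
have d0 : (0 <= d)%R := normr_ge0 _.
move: dg dy; rewrite -/q -/d => dg dy close.
have closeK : ((d + q) * K < del / 2)%R.
  have -> : (del / 2 = (del / (2 * K)) * K)%R by field; rewrite gt_eqF.
  by rewrite ltr_pM2r.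
have B1 : (q * `|y0| <= q * K)%R by rewrite ler_wpM2l // /K; lra.
have B2 : (dnorm ys0 * d <= K * d)%R by rewrite ler_wpM2r // /K; lra.
move: (le_trans dy B2) (le_trans dg B1); rewrite !ler_norml => /andP[? ?] /andP[? ?].
rewrite /del in closeK *; lra.
Qed.

(* Lower semicontinuity of a conjugate along the points of parameter [dyad n]
   of a segment ending at [(x, xs)]. *)
Lemma fconji_le_of_segment f x xs x0 xs0 (c d : R) :
  (forall n, (0 < n)%N -> fconji f (segx (dyad n) x x0) (segf (dyad n) xs xs0) <=
     (dyad n * c + (1 - dyad n) * d)%:E) ->
  fconji f x xs <= c%:E.
Proof.
move=> seg_le; apply: fconji_le => w ws Dws.
have {}seg_le n : (0 < n)%N -> (segf (dyad n) xs xs0 w + ws (segx (dyad n) x x0))%:E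
    - f w ws <= (dyad n * c + (1 - dyad n) * d)%:E.
  by move=> n0; apply: le_trans (seg_le n n0); exact: fconji_ge.
move: seg_le; case: (f w ws) => [rho||] seg_le; last 2 first.
- by rewrite addeNy leNye.
- by have := seg_le 1%N isT; rewrite addey.
rewrite -EFinB lee_fin; suff : (xs w + ws x - rho - c <= 0)%R by lra.
apply: (@le0_of_dyadic _ _ ((xs w + ws x - rho - c) - (xs0 w + ws x0 - rho - d))).
move=> n n0; have := seg_le n n0.
rewrite -EFinB lee_fin /segf /segx /dyad (dualD Dws) !(dualZ Dws).
set s := ((2^-1 : R)^+n)%R; nra.
Qed.

End Conjugate.

Section Representation.
Context {R : realType} {X : normedModType R}.
Local Notation D := (@is_dual R X).
Local Open Scope ereal_scope.
Implicit Types f g : X -> (X -> R) -> \bar R.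

Definition ge_pairing f := forall x xs, D xs -> (xs x)%:E <= f x xs.

Definition cross_additive f := forall x xs y ys, D xs -> D ys ->
  (xs y + ys x)%:E <= f x xs + f y ys.

Lemma ge_pairing_neqNy {f} x {xs} : ge_pairing f -> D xs -> f x xs != -oo.
Proof. by move=> fp Dxs; have := fp x xs Dxs; case: (f x xs). Qed.

Lemma cross_additive_of_fconji_le {f} : ge_pairing f ->
  (forall x xs, D xs -> fconji f x xs <= f x xs) -> cross_additive f.
Proof.
move=> fp fconj_le x xs y ys Dxs Dys.
apply: leeD_of_leeB; try exact: ge_pairing_neqNy.
rewrite [(xs y + _)%R]addrC; apply: le_trans (fconji_ge f y ys x Dxs) _.
exact: fconj_le.
Qed.

Lemma fconji_le_of_cross_additive {f} : ge_pairing f -> cross_additive f ->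
  forall x xs, D xs -> fconji f x xs <= f x xs.
Proof.
move=> fp fadd x xs Dxs; apply: fconji_le => y ys Dys.
apply: leeB_of_leeD; first exact: ge_pairing_neqNy.
by rewrite [(xs y + _)%R]addrC; apply: fadd.
Qed.

Lemma Lg_additive_enl {g} : cross_additive g -> additive_enl (Lg g).
Proof.
move=> gadd e1 e2 x y xs ys _ _ [Dxs gx] [Dys gy].
have := le_trans (gadd x xs y ys Dxs Dys) (leeD gx gy).
by rewrite -EFinD lee_fin (dualB Dxs) (dualB Dys); lra.
Qed.

Lemma Lg_gap {g x xs} {r : R} : ge_pairing g -> D xs -> g x xs = r%:E ->
  [/\ (0 <= r - xs x)%R & Lg g (r - xs x) x xs].
Proof.
move=> gp Dxs gx; have := gp x xs Dxs; rewrite gx lee_fin subr_ge0 => xr.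
by split=> //; split=> //; rewrite gx subrKC.
Qed.

Lemma cross_additive_of_Lg {g} : ge_pairing g -> additive_enl (Lg g) -> cross_additive g.
Proof.
move=> gp gadd x xs y ys Dxs Dys.
move: (ge_pairing_neqNy x gp Dxs) (ge_pairing_neqNy y gp Dys).
case E1: (g x xs) => [r1||] //; case E2: (g y ys) => [r2||] // _ _;
  rewrite ?addey ?addye ?leey //.
have [e1 L1] := Lg_gap gp Dxs E1; have [e2 L2] := Lg_gap gp Dys E2.
have := gadd _ _ _ _ _ _ e1 e2 L1 L2.
by rewrite -EFinD lee_fin (dualB Dxs) (dualB Dys); lra.
Qed.

Lemma le_of_Lg_subset {g g'} : ge_pairing g ->
  (forall e x, (0 <= e)%R -> Lg g e x `<=` Lg g' e x) ->
  forall x xs, D xs -> g' x xs <= g x xs.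
Proof.
move=> gp sub x xs Dxs; move: (ge_pairing_neqNy x gp Dxs).
case E: (g x xs) => [r||] // _; first last; first by rewrite leey.
have [e0 L] := Lg_gap gp Dxs E; have [_] := sub _ x e0 xs L.
by rewrite subrKC.
Qed.

Lemma eq_Lg {g1 g2} : (forall x xs, D xs -> g1 x xs = g2 x xs) ->
  forall e x, Lg g1 e x = Lg g2 e x.
Proof.
by move=> g12 e x; apply/seteqP; split => xs [Dxs gx]; split => //; rewrite ?g12 // -g12.
Qed.

End Representation.

Section MaximalMonotone.
Context {R : realType} {X : normedModType R}.
Local Notation D := (@is_dual R X).
Local Open Scope ereal_scope.
Context {T : X -> set (X -> R)} (T_maxmon : max_monotone_op T).

Lemma max_monotone_nonempty : exists x0 xs0, T x0 xs0.
Proof.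
have [Top [_ Tmax]] := T_maxmon.
apply/not_existsP => emptyT.
pose S (x : X) : set (X -> R) := [set f | x = 0%R /\ f = (fun _ => 0%R)].
have Sop : is_operator S by move=> x f [_ ->]; exact: is_dual_cst0.
have Smon : monotone_op S by move=> x y f g [_ ->] [_ ->]; rewrite subrr.
have TS x : T x `<=` S x by move=> f Tf; case: (emptyT x); exists f.
have := Tmax S Sop Smon TS 0%R.
by move/seteqP => [/(_ (fun _ => 0%R)) T0 _]; case: (emptyT 0%R); exists (fun _ => 0%R); exact: T0.
Qed.

(* Otherwise [(x, xs)] would be monotonically related to the whole graph of
   [T], contradicting maximality. *)
Lemma fconji_ge_pairing {f} : (forall y ys, T y ys -> f y ys = (ys y)%:E) ->
  ge_pairing (fconji f).
Proof.
have [Top [Tmon Tmax]] := T_maxmon.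
move=> fT x xs Dxs; rewrite leNgt; apply/negP => lt_pair.
have gap y ys : T y ys -> (0 < xs (x - y) - ys (x - y))%R.
  move=> Tyy; have Dys := Top _ _ Tyy.
  have := le_lt_trans (fconji_ge f x xs y Dys) lt_pair.
  by rewrite fT // -EFinB lte_fin (dualB Dxs) (dualB Dys); lra.
pose S z : set (X -> R) := [set zs | T z zs \/ (z = x /\ zs = xs)].
have Sop : is_operator S by move=> z zs [/Top //|[_ ->]].
have Smon : monotone_op S.
  move=> y z ys zs [Ty|[-> ->]] [Tz|[-> ->]].
  - exact: Tmon Ty Tz.
  - have := gap _ _ Ty; have Dys := Top _ _ Ty.
    by rewrite !(dualB Dxs) !(dualB Dys); lra.
  - exact/ltW/gap.
  - by rewrite subrr.
have Txx : T x xs by rewrite -(Tmax S Sop Smon (fun z zs Tz => or_introl Tz) x); right.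
have := le_lt_trans (fconji_ge f x xs x Dxs) lt_pair.
by rewrite fT // -EFinB lte_fin; lra.
Qed.

(* Convexity of [h] between [(w, ws)] and a graph point [(a, as_)], along
   [t = 2^-n -> 0]. *)
Lemma HT_ge_fitzpatrick {h} a as_ w ws : HT T h -> T a as_ -> D ws ->
  (ws a + as_ w - as_ a)%:E <= h w ws.
Proof.
have [Top _] := T_maxmon.
move=> [_ [hconv [hp hT]]] Ta Dws; have Das := Top _ _ Ta.
have := hp w ws Dws; case Eh: (h w ws) => [r||]; rewrite ?leey ?leeNy_eq // !lee_fin => rp.
set W := ws w; set c := (ws a + as_ w - as_ a)%R.
suff : (c - r <= 0)%R by lra.
apply: (@le0_of_dyadic _ _ (c - W)%R) => n n0.
set t := ((2^-1)^+n)%R.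
have t0 : (0 < t)%R by rewrite exprn_gt0.
have t1 : (t < 1)%R by rewrite exprn_ilt1 // ?invr_ge0 ?invf_lt1 ?ltr1n // -lt0n.
have := hconv w a ws as_ t Dws Das t0 t1.
rewrite Eh (hT a as_ Ta) => hle.
have := le_trans (hp _ _ (is_dual_comb t (1 - t) Dws Das)) hle.
rewrite /= -!EFinM -EFinD lee_fin.
rewrite !(dualD Dws) !(dualD Das) !(dualZ Dws) !(dualZ Das) -/W => H.
have : (t * (t * W + (1 - t) * c) <= t * r)%R by move: H; rewrite /c; nra.
by rewrite ler_pM2l //; lra.
Qed.

End MaximalMonotone.

Section QuadraticForm.
Context {R : realType} {X : normedModType R}.
Local Notation D := (@is_dual R X).

(* [qdual as_] equals [dnorm as_ ^+ 2]; only the Fenchel-Young inequality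
   [qform_cross] is needed. *)
Definition qdual (as_ : X -> R) : R := sup [set 2 * as_ b - `|b| ^+ 2 | b in [set: X]].

Definition qform (a : X) (as_ : X -> R) : R := `|a| ^+ 2 + qdual as_.

Lemma qdual_ge {as_} b : D as_ -> 2 * as_ b - `|b| ^+ 2 <= qdual as_.
Proof.
move=> Das; apply: sup_upper_bound; last by exists b.
split; first by exists (2 * as_ 0 - `|(0 : X)| ^+ 2), 0.
exists (dnorm as_ ^+ 2) => _ [c _ <-].
have := dual_le_dnorm c Das; have := dnorm_ge0 Das; have := normr_ge0 c.
rewrite ler_norml => ? ? /andP [? ?].
by have := sqr_ge0 (dnorm as_ - `|c|); rewrite !expr2 => ?; nra.
Qed.

Lemma qform_cross a as_ b bs : D as_ -> D bs ->
  2 * (as_ b + bs a) <= qform a as_ + qform b bs.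
Proof. by move=> Das Dbs; have := qdual_ge b Das; have := qdual_ge a Dbs; rewrite /qform; lra. Qed.

Lemma qform0_le0 : qform 0 (fun _ => 0) <= 0.
Proof.
rewrite /qform normr0 expr0n /= add0r.
apply: ge_sup; first by exists (2 * 0 - `|(0 : X)| ^+ 2), 0.
by move=> _ [c _ <-]; rewrite mulr0 sub0r oppr_le0 sqr_ge0.
Qed.

End QuadraticForm.

Section Averaged.
Context {R : realType} {X : normedModType R}.
Local Notation D := (@is_dual R X).
Local Open Scope ereal_scope.
Context {T : X -> set (X -> R)} {h : X -> (X -> R) -> \bar R}.
Context (T_maxmon : max_monotone_op T) (hT : HT T h).

Lemma graph_dual {y ys} : T y ys -> D ys.
Proof. by case: T_maxmon => Top _; exact: Top. Qed.

Lemma h_ge_pairing : ge_pairing h.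
Proof. by case: hT => _ [_ []]. Qed.

Lemma h_graph y ys : T y ys -> h y ys = (ys y)%:E.
Proof. by case: hT => _ [_ [_]]; apply. Qed.

Lemma fconji_h_ge_pairing : ge_pairing (fconji h).
Proof. exact: (fconji_ge_pairing T_maxmon h_graph). Qed.

Lemma fconji_h_graph y ys : T y ys -> fconji h y ys = (ys y)%:E.
Proof.
move=> Ty; apply/eqP; rewrite eq_le; apply/andP; split; last first.
  exact: fconji_h_ge_pairing (graph_dual Ty).
apply: fconji_le => w ws Dws; apply/leeBEFin.
by rewrite [(ys w + _)%R]addrC; exact: (HT_ge_fitzpatrick T_maxmon _ _ _ _ hT Ty Dws).
Qed.

Lemma Aop_cases x {xs} : D xs ->
  (Aop h x xs = +oo /\ (h x xs = +oo \/ fconji h x xs = +oo)) \/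
  exists r c, [/\ h x xs = r%:E, fconji h x xs = c%:E & Aop h x xs = ((r + c) / 2)%:E].
Proof.
move=> Dxs; rewrite AopE.
exact: half_sum_cases (ge_pairing_neqNy x h_ge_pairing Dxs)
  (ge_pairing_neqNy x fconji_h_ge_pairing Dxs).
Qed.

Lemma Aop_ge_pairing : ge_pairing (Aop h).
Proof.
move=> x xs Dxs; case: (Aop_cases x Dxs) => [[-> _]|[r [c [hx cx ->]]]]; first exact: leey.
have := h_ge_pairing x _ Dxs; have := fconji_h_ge_pairing x _ Dxs.
by rewrite hx cx !lee_fin; lra.
Qed.

Lemma Aop_graph y ys : T y ys -> Aop h y ys = (ys y)%:E.
Proof. by move=> Ty; rewrite AopE h_graph // fconji_h_graph // -EFinD -EFinM; congr EFin; lra. Qed.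

Lemma Aop_cross_additive : cross_additive (Aop h).
Proof.
move=> x xs y ys Dxs Dys.
case: (Aop_cases x Dxs) => [[-> _]|[r1 [c1 [hx cx ->]]]].
  by rewrite addye ?leey // (ge_pairing_neqNy y Aop_ge_pairing Dys).
case: (Aop_cases y Dys) => [[-> _]|[r2 [c2 [hy cy ->]]]]; first by rewrite addey ?leey.
move: (fconji_ge h y ys x Dxs) (fconji_ge h x xs y Dys).
by rewrite hx cx hy cy -!EFinB -EFinD !lee_fin; lra.
Qed.

Lemma Tbreve_Lg e x : Tbreve h e x = Lg (Aop h) e x.
Proof.
apply/seteqP; split => xs.
- move=> [Dxs [_ [hfin h_sub]]]; split => //.
  move: (ge_pairing_neqNy x h_ge_pairing Dxs) hfin h_sub.
  case E: (h x xs) => [r||] //= _ _ h_sub.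
  have conj_le : fconji h x xs <= (2 * (xs x + e) - r)%:E.
    apply: fconji_le => w ws Dws; apply/leeBEFin.
    by apply: le_trans (h_sub w ws Dws); rewrite -EFinD lee_fin (dualB Dxs); lra.
  case: (Aop_cases x Dxs) => [[_ [hy|cy]]|[r' [c' [hx cx ->]]]].
  + by rewrite hy in E.
  + by move: conj_le; rewrite cy leNgt ltry.
  + by move: hx conj_le; rewrite E cx => -[<-]; rewrite !lee_fin; lra.
- move=> [Dxs]; case: (Aop_cases x Dxs) => [[-> _]|[r [c [hx cx ->]]]].
    by rewrite leNgt ltry.
  rewrite lee_fin => xs_le; split => //; split => //; split; first by rewrite hx ltry.
  move=> w ws Dws; have := fconji_ge h x xs w Dws; rewrite cx => /leeBEFin.
  by apply: le_trans; rewrite hx -EFinD lee_fin (dualB Dxs); lra.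
Qed.

Lemma TbreveE : Tbreve h = Lg (Aop h).
Proof. by apply: funext => e; apply: funext => x; exact: Tbreve_Lg. Qed.

Lemma Tbreve_additive : additive_enl (Tbreve h).
Proof. by rewrite TbreveE; exact: Lg_additive_enl Aop_cross_additive. Qed.

Lemma fconji_Aop_le x {xs} : D xs -> fconji (Aop h) x xs <= Aop h x xs.
Proof. exact: fconji_le_of_cross_additive Aop_ge_pairing Aop_cross_additive x xs. Qed.

Lemma fconji_Aop_ge_pairing : ge_pairing (fconji (Aop h)).
Proof. exact: (fconji_ge_pairing T_maxmon Aop_graph). Qed.

Lemma fconji_Aop_graph y ys : T y ys -> fconji (Aop h) y ys = (ys y)%:E.
Proof.
move=> Ty; apply/eqP; rewrite eq_le; apply/andP; split.
  by rewrite -Aop_graph //; exact: fconji_Aop_le _ (graph_dual Ty).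
exact: fconji_Aop_ge_pairing (graph_dual Ty).
Qed.

(* If [f] represents an additive enlargement containing [Tbreve h] then
   [fconji (Aop h) <= fconji f <= f <= Aop h]. *)
Lemma max_additive_of_fconji_Aop :
  (forall x xs, D xs -> fconji (Aop h) x xs = Aop h x xs) -> max_additive_enl T (Tbreve h).
Proof.
move=> selfdual; split; [|split; first exact: Tbreve_additive].
  exists (fconji (Aop h)); split; last first.
    by move=> eps x _; rewrite TbreveE; apply: eq_Lg => y ys Dys; rewrite selfdual.
  split; first exact: fconji_lsc.
  split; first exact: fconji_convex.
  split; first exact: fconji_Aop_ge_pairing.
  exact: fconji_Aop_graph.
move=> E' [f [[_ [_ [fp _]]] E'E]] E'add sub.
have fadd : cross_additive f.
  apply: cross_additive_of_Lg fp _ => e1 e2 x y xs ys e10 e20.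
  by rewrite -!E'E //; exact: E'add.
have f_le : forall x xs, D xs -> f x xs <= Aop h x xs.
  apply: le_of_Lg_subset Aop_ge_pairing _ => e x e0.
  by rewrite -TbreveE -E'E //; exact: sub.
have f_eq x xs : D xs -> f x xs = Aop h x xs.
  move=> Dxs; apply/eqP; rewrite eq_le f_le //= -selfdual //.
  apply: le_trans (fconji_le_of_cross_additive fp fadd x xs Dxs).
  exact: le_fconji f_le x xs.
by move=> eps x e0; rewrite E'E // TbreveE; apply: eq_Lg => y ys Dys; rewrite f_eq.
Qed.

Lemma fconji_Aop_of_selfdual : (forall x xs, D xs -> fconji h x xs = h x xs) ->
  forall x xs, D xs -> fconji (Aop h) x xs = Aop h x xs.
Proof.
move=> selfdual.
have Ah x xs : D xs -> Aop h x xs = h x xs.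
  move=> Dxs; case: (Aop_cases x Dxs) => [[-> [->|]]|[r [c [hx cx ->]]]] //.
    by rewrite selfdual.
  by move: cx; rewrite selfdual // hx => -[->]; congr EFin; lra.
by move=> x xs Dxs; rewrite (eq_fconji Ah) Ah //; exact: selfdual.
Qed.

Definition reg_at x xs a as_ : \bar R := (2^-1)%:E *
  (Aop h (x + a)%R (fun w => xs w + as_ w)%R +
   fconji (Aop h) (x - a)%R (fun w => xs w - as_ w)%R + (qform a as_)%:E).

Definition reg x xs : \bar R := ereal_inf [set reg_at x xs a as_ | a in [set: X] & as_ in D].

Definition reg_hull : X -> (X -> R) -> \bar R := fconji (fconji reg).

Lemma reg_at_cases x {xs} a {as_} : D xs -> D as_ -> reg_at x xs a as_ = +oo \/
  exists r c, [/\ Aop h (x + a)%R (fun w => xs w + as_ w)%R = r%:E,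
    fconji (Aop h) (x - a)%R (fun w => xs w - as_ w)%R = c%:E &
    reg_at x xs a as_ = ((r + c + qform a as_) / 2)%:E].
Proof.
move=> Dxs Das; apply: half_sum3_cases.
- exact: ge_pairing_neqNy Aop_ge_pairing (is_dualD Dxs Das).
- exact: ge_pairing_neqNy fconji_Aop_ge_pairing (is_dualB Dxs Das).
Qed.

Lemma reg_at_neqNy x {xs} a {as_} : D xs -> D as_ -> reg_at x xs a as_ != -oo.
Proof. by move=> Dxs Das; case: (reg_at_cases x a Dxs Das) => [->|[r [c [_ _ ->]]]]. Qed.

(* Fenchel-Young for [Aop h] at [(x + a, y - b)] and [(y + b, x - a)], plus
   [qform_cross] for the perturbations. *)
Lemma reg_at_cross x xs a as_ y ys b bs : D xs -> D as_ -> D ys -> D bs ->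
  (xs y + ys x)%:E <= reg_at x xs a as_ + reg_at y ys b bs.
Proof.
move=> Dxs Das Dys Dbs.
case: (reg_at_cases x a Dxs Das) => [->|[r1 [c1 [A1 C1 ->]]]].
  by rewrite addye ?leey // reg_at_neqNy.
case: (reg_at_cases y b Dys Dbs) => [->|[r2 [c2 [A2 C2 ->]]]]; first by rewrite addey ?leey.
have Y1 := fconji_ge (Aop h) (y - b)%R (fun w => ys w - bs w)%R (x + a)%R (is_dualD Dxs Das).
have Y2 := fconji_ge (Aop h) (x - a)%R (fun w => xs w - as_ w)%R (y + b)%R (is_dualD Dys Dbs).
rewrite A1 C2 -EFinB lee_fin /= in Y1; rewrite A2 C1 -EFinB lee_fin /= in Y2.
have Q := qform_cross a as_ b bs Das Dbs.
rewrite !(dualD Dxs, dualD Das, dualD Dys, dualD Dbs, dualB Dxs, dualB Das, dualB Dys, dualB Dbs)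
  in Y1 Y2.
rewrite !(dualN Dxs, dualN Das, dualN Dys, dualN Dbs) in Y1 Y2.
by rewrite -EFinD lee_fin; lra.
Qed.

Lemma reg_le_at x xs a {as_} : D as_ -> reg x xs <= reg_at x xs a as_.
Proof. by move=> Das; apply: ereal_inf_lbound; exists a => //; exists as_. Qed.

Lemma reg_neqNy x {xs} : D xs -> reg x xs != -oo.
Proof.
move=> Dxs; apply: (@ereal_inf_neqNy _ _ (xs x + xs x)%R).
  by move=> _ _ [a _ [as_ Das <-]] [b _ [bs Dbs <-]]; exact: reg_at_cross.
by move=> _ [a _ [as_ Das <-]]; exact: reg_at_neqNy.
Qed.

Lemma reg_cross_additive : cross_additive reg.
Proof.
move=> x xs y ys Dxs Dys; apply: ereal_inf_sum_lb; try exact: reg_neqNy.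
- by move=> _ _ [a _ [as_ Das <-]] [b _ [bs Dbs <-]]; exact: reg_at_cross.
- by move=> _ [a _ [as_ Das <-]]; exact: reg_at_neqNy.
- by move=> _ [a _ [as_ Das <-]]; exact: reg_at_neqNy.
Qed.

Lemma reg_ge_pairing : ge_pairing reg.
Proof.
move=> x xs Dxs; have := reg_cross_additive x xs x xs Dxs Dxs; move: (reg_neqNy x Dxs).
by case: (reg x xs) => [p||] //= _; rewrite ?leey // -EFinD !lee_fin; lra.
Qed.

Lemma reg_at0_le {x xs r c} : Aop h x xs = r%:E -> fconji (Aop h) x xs = c%:E ->
  reg_at x xs 0 (fun _ => 0%R) <= ((r + c) / 2)%:E.
Proof.
move=> A C; rewrite /reg_at addr0 subr0.
have -> : (fun w => xs w + 0)%R = xs by apply: funext => w; rewrite addr0.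
have -> : (fun w => xs w - 0)%R = xs by apply: funext => w; rewrite subr0.
by rewrite A C -!EFinD -EFinM lee_fin; have := @qform0_le0 R X; lra.
Qed.

Lemma reg_le_Aop x {xs} : D xs -> reg x xs <= Aop h x xs.
Proof.
move=> Dxs; apply: le_trans (reg_le_at x xs 0 is_dual_cst0) _.
move: (Aop_ge_pairing x _ Dxs) (fconji_Aop_le x Dxs) (fconji_Aop_ge_pairing x _ Dxs).
case A: (Aop h x xs) => [r||]; rewrite ?leey ?leeNy_eq //.
case C: (fconji (Aop h) x xs) => [c||] //; rewrite !lee_fin => ? ? _.
by apply: le_trans (reg_at0_le A C) _; rewrite lee_fin; lra.
Qed.

Lemma reg_hull_le_Aop x {xs} : D xs -> reg_hull x xs <= Aop h x xs.
Proof. by move=> Dxs; apply: le_trans (fconji2_le reg x Dxs) (reg_le_Aop x Dxs). Qed.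

Lemma fconji_reg_le_hull x xs : fconji reg x xs <= reg_hull x xs.
Proof. exact: (le_fconji (fconji_le_of_cross_additive reg_ge_pairing reg_cross_additive)). Qed.

Lemma reg_hull_ge_pairing : ge_pairing reg_hull.
Proof.
move=> x xs Dxs; apply: le_trans (fconji_Aop_ge_pairing _ _ Dxs) _.
by apply: le_trans _ (fconji_reg_le_hull x xs); exact: (le_fconji reg_le_Aop).
Qed.

Lemma reg_hull_cross_additive : cross_additive reg_hull.
Proof.
apply: (cross_additive_of_fconji_le reg_hull_ge_pairing) => x xs Dxs.
exact: le_trans (fconji2_le (fconji reg) x Dxs) (fconji_reg_le_hull x xs).
Qed.

Lemma reg_hull_HT : HT T reg_hull.
Proof.
split; first exact: fconji_lsc.
split; first exact: fconji_convex.
split; first exact: reg_hull_ge_pairing.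
move=> x xs Tx; apply/eqP; rewrite eq_le; apply/andP; split.
  by rewrite -Aop_graph //; exact: reg_hull_le_Aop _ (graph_dual Tx).
exact: reg_hull_ge_pairing (graph_dual Tx).
Qed.

Section MaximalityForcesSelfDuality.
Hypothesis Aop_le_hull : forall x xs, D xs -> Aop h x xs <= reg_hull x xs.

Lemma Aop_le_reg_at x {xs} a {as_} : D xs -> D as_ -> Aop h x xs <= reg_at x xs a as_.
Proof.
move=> Dxs Das; apply: le_trans (Aop_le_hull _ _ Dxs) _.
exact: le_trans (fconji2_le reg x Dxs) (reg_le_at x xs a Das).
Qed.

Lemma fconji_Aop_fin x {xs r} : D xs -> Aop h x xs = r%:E -> fconji (Aop h) x xs = r%:E.
Proof.
move=> Dxs A; move: (fconji_Aop_le x Dxs) (fconji_Aop_ge_pairing x _ Dxs); rewrite A.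
case C: (fconji (Aop h) x xs) => [c||] //; rewrite !lee_fin => cr _.
have := le_trans (Aop_le_reg_at x 0 Dxs is_dual_cst0) (reg_at0_le A C).
by rewrite A lee_fin => rc; congr EFin; lra.
Qed.

Section Segment.
Context {x : X} {xs : X -> R} {x0 : X} {xs0 : X -> R} {c : R}.
Hypotheses (Dxs : D xs) (T0 : T x0 xs0) (C : fconji (Aop h) x xs = c%:E).

Let Dseg t : D (segf t xs xs0) := is_dual_comb t (1 - t) Dxs (graph_dual T0).

(* For [s = (1 + t) / 2] the perturbation [(a, as_)] below satisfies
   [z_s + (a, as_) = z_t] and [z_s - (a, as_) = (x, xs)], so the bound
   [Aop h z_s <= reg_at z_s a as_] only involves [Aop h z_t] and [c]. *)
Lemma Aop_segment_finite n : Aop h (segx (dyad n) x x0) (segf (dyad n) xs xs0) != +oo.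
Proof.
elim: n => [|n IH].
  rewrite /segx /segf /dyad expr0 subrr subr0 scale0r scale1r add0r.
  by rewrite (_ : (fun u => 0 * xs u + 1 * xs0 u)%R = xs0) ?Aop_graph //;
    apply: funext => u; rewrite mul0r mul1r add0r.
rewrite dyadS; move: IH; set t := dyad n => IH; set s := ((1 + t) / 2)%R.
pose a := (((t - 1) / 2) *: x + ((1 - t) / 2) *: x0)%R.
pose as_ u := ((t - 1) / 2 * xs u + (1 - t) / 2 * xs0 u)%R.
have Das : D as_ := is_dual_comb _ _ Dxs (graph_dual T0).
have Ex1 : (segx s x x0 + a = segx t x x0)%R.
  rewrite /segx /a addrACA -(scalerDl x) -(scalerDl x0).
  by congr (_ *: _ + _ *: _)%R; rewrite /s; field.
have Ex2 : (segx s x x0 - a = x)%R.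
  rewrite /segx /a opprD addrACA -(scaleNr _ x) -(scaleNr _ x0) -(scalerDl x) -(scalerDl x0) /s.
  have -> : ((1 + t) / 2 + - ((t - 1) / 2) = 1)%R by field.
  have -> : (1 - (1 + t) / 2 + - ((1 - t) / 2) = 0)%R by field.
  by rewrite scale1r scale0r addr0.
have Ef1 : (fun w => segf s xs xs0 w + as_ w)%R = segf t xs xs0.
  by apply: funext => w; rewrite /segf /as_ /s; field.
have Ef2 : (fun w => segf s xs xs0 w - as_ w)%R = xs.
  by apply: funext => w; rewrite /segf /as_ /s; field.
have := Aop_le_reg_at (segx s x x0) a (Dseg s) Das.
rewrite /reg_at Ex1 Ef1 Ex2 Ef2 C; move: IH (Aop_ge_pairing (segx t x x0) _ (Dseg t)).
case: (Aop h (segx t x x0) (segf t xs xs0)) => [r||] // _ _ Afin.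
by rewrite -ltey; apply: le_lt_trans Afin _; rewrite -!EFinD -EFinM ltry.
Qed.

(* On the segment [Aop h] agrees with its conjugate, which is convex. *)
Lemma Aop_segment_le {n} : (0 < n)%N ->
  Aop h (segx (dyad n) x x0) (segf (dyad n) xs xs0) <= (dyad n * c + (1 - dyad n) * xs0 x0)%:E.
Proof.
move=> n0; move: (Aop_segment_finite n) (Aop_ge_pairing (segx (dyad n) x x0) _ (Dseg (dyad n))).
case A: (Aop h _ _) => [r||] // _ _; rewrite -(fconji_Aop_fin _ (Dseg _) A) /segx /segf.
apply: le_trans (fconji_convex (Aop h) x x0 xs xs0 (dyad n) Dxs (graph_dual T0)
  (dyad_gt0 n0) (dyad_lt1 n)) _.
by rewrite C fconji_Aop_graph // -!EFinM -EFinD.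
Qed.

End Segment.

Lemma Aop_le_fconji_fin {x xs c} : D xs -> fconji (Aop h) x xs = c%:E -> Aop h x xs <= c%:E.
Proof.
move=> Dxs C; have [x0 [xs0 T0]] := max_monotone_nonempty T_maxmon.
apply: le_trans (Aop_le_hull _ _ Dxs) _.
apply: (fconji_le_of_segment _ _ _ x0 xs0 _ (xs0 x0)) => n n0.
apply: le_trans (reg_hull_le_Aop _ (is_dual_comb _ _ Dxs (graph_dual T0)))
  (Aop_segment_le Dxs T0 C n0).
Qed.

Lemma fconji_Aop_eq_of_le_hull x xs : D xs -> fconji (Aop h) x xs = Aop h x xs.
Proof.
move=> Dxs; move: (fconji_Aop_le x Dxs) (fconji_Aop_ge_pairing x _ Dxs).
case C: (fconji (Aop h) x xs) => [c||] //; last by rewrite leye_eq => /eqP ->.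
move=> _ _; move: (Aop_le_fconji_fin Dxs C) (Aop_ge_pairing x _ Dxs).
by case A: (Aop h x xs) => [r||] // _ _; rewrite -C; exact: fconji_Aop_fin.
Qed.

End MaximalityForcesSelfDuality.

(* [reg_hull] is an additive representative below [Aop h]; maximality of
   [Tbreve h = Lg (Aop h)] therefore forces [Aop h <= reg_hull]. *)
Lemma fconji_Aop_of_max_additive : max_additive_enl T (Tbreve h) ->
  forall x xs, D xs -> fconji (Aop h) x xs = Aop h x xs.
Proof.
move=> [_ [_ Tmax]]; apply: fconji_Aop_eq_of_le_hull.
have hull_enl : is_enlargement T (Lg reg_hull) by exists reg_hull; split; [exact: reg_hull_HT|].
have sub e y : (0 <= e)%R -> Tbreve h e y `<=` Lg reg_hull e y.
  move=> _; rewrite TbreveE => ys [Dys Ay]; split => //.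
  exact: le_trans (reg_hull_le_Aop y Dys) Ay.
have eqL := Tmax _ hull_enl (Lg_additive_enl reg_hull_cross_additive) sub.
apply: (le_of_Lg_subset reg_hull_ge_pairing) => e y e0.
by rewrite -eqL // TbreveE.
Qed.

End Averaged.

Theorem corollary3p5 (R : realType) (X : completeNormedModType R)
  (T : X -> set (X -> R)) (h : X -> (X -> R) -> \bar R) :
  reflexive_space X -> max_monotone_op T -> HT T h ->
  additive_enl (Tbreve h) /\
  (max_additive_enl T (Tbreve h) <->
     (forall x xs, is_dual xs -> fconj (Aop h) xs x = Aop h x xs)) /\
  ((forall x xs, is_dual xs -> fconj h xs x = h x xs) ->
     max_additive_enl T (Tbreve h)).
Proof.
move=> _ T_maxmon hT; split; first exact: Tbreve_additive T_maxmon hT.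
split; first split.
- exact: fconji_Aop_of_max_additive.
- exact: max_additive_of_fconji_Aop.
- move=> selfdual; apply: max_additive_of_fconji_Aop => //.
  exact: (fconji_Aop_of_selfdual T_maxmon hT selfdual).
Qed.
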